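(* Let $\beta>0$, $\bar\mu\in\mathbb{R}^{N\times p}$, $g\in C^3(\mathbb{R})$, $m=g\circ G_\beta$, and for indices $k=(k_1,k_2,k_3)\in[N]^3$, $j=(j_1,j_2,j_3)\in[p]^3$ and $x\in\mathbb{R}^{N\times p}$ define $$U_{(k,j)}(x)=\sup\Big\{\Big|\frac{\partial^3m}{\partial X_{k_1j_1}\partial X_{k_2j_2}\partial X_{k_3j_3}}(x+y)\Big|:y\in\mathbb{R}^{N\times p},\ \|y\|_\infty\le\beta^{-1}\Big\}.$$ Then for every $x\in\mathbb{R}^{N\times p}$, $$\sum_{(k,j)\in[N]^3\times[p]^3}U_{(k,j)}(x)\le e^{12}\{\|g'''\|_\infty+16\beta\|g''\|_\infty+24\beta^2\|g'\|_\infty\}.$$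
   Context: For $k\in[N]$ and $v\in\mathbb{R}^p$, $F_{\beta,\bar\mu_k}(v)=\beta^{-1}\log\big(\sum_{j=1}^p\exp(\beta\{v_j+\bar\mu_{kj}\})\big)$; for $X\in\mathbb{R}^{N\times p}$ with rows $X_{1\cdot},\dots,X_{N\cdot}$, $F_{\beta,\bar\mu}(X)=(F_{\beta,\bar\mu_1}(X_{1\cdot}),\dots,F_{\beta,\bar\mu_N}(X_{N\cdot}))'\in\mathbb{R}^N$; for $u\in\mathbb{R}^N$, $F_{\beta,0}(u)=\beta^{-1}\log\sum_{k=1}^N\exp(\beta u_k)$; $G_\beta(X)=-F_{\beta,0}(-F_{\beta,\bar\mu}(X))$. $\|y\|_\infty=\max_{k,j}|y_{kj}|$ and $\|g^{(r)}\|_\infty=\sup_t|g^{(r)}(t)|$. *)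

From HB Require Import structures.
From mathcomp Require Import all_boot all_order all_algebra.
From mathcomp Require Import all_classical all_reals all_analysis.
Set Implicit Arguments. Unset Strict Implicit. Unset Printing Implicit Defensive.
Import Order.TTheory GRing.Theory Num.Theory numFieldNormedType.Exports.
Local Open Scope ring_scope.

Section Defs.
Variable R : realType.

Definition Fmuk (N p : nat) (beta : R) (mu : 'M[R]_(N, p)) (k : 'I_N)
  (v : 'I_p -> R) : R :=
  beta^-1 * ln (\sum_(j < p) expR (beta * (v j + mu k j))).

Definition F0 (N : nat) (beta : R) (u : 'I_N -> R) : R :=
  beta^-1 * ln (\sum_(k < N) expR (beta * u k)).

Definition Gbeta (N p : nat) (beta : R) (mu : 'M[R]_(N, p)) (X : 'M[R]_(N, p)) : R :=
  - F0 beta (fun k => - Fmuk beta mu k (fun j => X k j)).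

Definition partial (N p : nat) (k : 'I_N) (j : 'I_p)
  (f : 'M[R]_(N, p) -> R) : 'M[R]_(N, p) -> R :=
  fun x => derive1 (fun t : R => f (x + t *: delta_mx k j)) 0.

Definition C3 (g : R -> R) : Prop :=
  (forall n, (n < 3)%N -> forall x, derivable (derive1n n g) x 1)
  /\ continuous (derive1n 3 g : R -> R).

Definition supnorm_der (r : nat) (g : R -> R) : \bar R :=
  ereal_sup [set (`|derive1n r g t|)%:E | t in [set: R]].

Definition Ukj (N p : nat) (beta : R) (m : 'M[R]_(N, p) -> R)
  (k1 k2 k3 : 'I_N) (j1 j2 j3 : 'I_p) (x : 'M[R]_(N, p)) : \bar R :=
  ereal_sup [set (`|partial k1 j1 (partial k2 j2 (partial k3 j3 m)) (x + y)|)%:E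
            | y in [set y : 'M[R]_(N, p) | forall a b, `|y a b| <= beta^-1]].

End Defs.

(* Write G = Glog.  Its gradient q_(k,j) = pi_k w_(k,j) is a probability vector
   on the entries (w is the softmax of each row, pi a softmin weight of the
   rows), and d_i q_i' = beta q_i' c_(i,i') with c affine in q, w and
   Kronecker deltas.  So every third partial derivative of m = g o G is an
   explicit polynomial in g', g'', g''' at G, beta, q, w and deltas, each of
   whose monomials carries three factors among q, w, c.  Moving x by y with
   |y| <= 1/beta changes each weight exp(beta (x + mu)) by a factor in
   [1/e, e], hence w and pi by at most e^2 and q by at most e^4, which gives
   e^12.  The resulting majorant is summed over all indices using only
   sum q = 1 and sum_j w_(k,j) = 1. *)

From HB Require Import structures.
From mathcomp Require Import all_boot all_order all_algebra.
From mathcomp Require Import all_classical all_reals all_analysis.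
From mathcomp Require Import ring lra.
Import Order.TTheory GRing.Theory Num.Theory numFieldNormedType.Exports.
Set Implicit Arguments. Unset Strict Implicit. Unset Printing Implicit Defensive.
Local Open Scope ring_scope.

Section DirectionalDerivative.
Variables (R : realType) (V : lmodType R).

Definition is_dderive (E : V) (f df : V -> R) :=
  forall X, is_derive (0 : R) 1 (fun t : R => f (X + t *: E)) (df X).

Lemma eq_is_dderive E f df df' :
  df =1 df' -> is_dderive E f df -> is_dderive E f df'.
Proof. by move=> e Hf X; rewrite -e; exact: Hf. Qed.

Lemma is_dderive_cst E c : is_dderive E (fun _ => c) (fun _ => 0).
Proof. by move=> X; exact: is_derive_cst. Qed.

Lemma is_dderiveD E f h df dh : is_dderive E f df -> is_dderive E h dh ->
  is_dderive E (fun X => f X + h X) (fun X => df X + dh X).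
Proof. by move=> Hf Hh X; exact: is_deriveD. Qed.

Lemma is_dderiveN E f df : is_dderive E f df ->
  is_dderive E (fun X => - f X) (fun X => - df X).
Proof. by move=> Hf X; exact: is_deriveN. Qed.

Lemma is_dderiveM E f h df dh : is_dderive E f df -> is_dderive E h dh ->
  is_dderive E (fun X => f X * h X) (fun X => f X * dh X + h X * df X).
Proof.
move=> Hf Hh X; have := is_deriveM (Hf X) (Hh X).
by rewrite /= scale0r addr0.
Qed.

Lemma is_dderiveV E f df : (forall X, f X != 0) -> is_dderive E f df ->
  is_dderive E (fun X => (f X)^-1) (fun X => - (f X) ^- 2 * df X).
Proof.
move=> f_neq0 Hf X; have := is_deriveV _ (Hf X).
by rewrite /= scale0r addr0; apply.
Qed.

Lemma is_dderive_sum E n (f df : 'I_n -> V -> R) :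
  (forall i, is_dderive E (f i) (df i)) ->
  is_dderive E (fun X => \sum_(i < n) f i X) (fun X => \sum_(i < n) df i X).
Proof.
move=> Hf X.
have -> : (fun t : R => \sum_(i < n) f i (X + t *: E)) =
          \sum_(i < n) (fun t : R => f i (X + t *: E)).
  by apply/funext => t; rewrite fct_sumE.
by apply: is_derive_sum => i; exact: Hf.
Qed.

Lemma is_dderive_comp (E : V) (phi dphi : R -> R) (f df : V -> R) :
  (forall X, is_derive (f X) 1 phi (dphi (f X))) -> is_dderive E f df ->
  is_dderive E (fun X => phi (f X)) (fun X => dphi (f X) * df X).
Proof.
move=> Hphi Hf X.
have := is_derive1_comp (f := phi) (g := fun t => f (X + t *: E)) _ (Hf X).
by rewrite /= scale0r addr0; apply; exact: Hphi.
Qed.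

End DirectionalDerivative.

Section MatrixDirectionalDerivative.
Variables (R : realType) (m n : nat).

Lemma is_dderive_entry (E : 'M[R]_(m, n)) k j :
  is_dderive E (fun X => X k j) (fun _ => E k j).
Proof.
move=> X.
have -> : (fun t : R => (X + t *: E) k j) = (fun t => X k j + t * E k j).
  by apply/funext => t; rewrite !mxE.
have := is_deriveD (is_derive_cst (X k j) (0 : R) (1 : R))
  (is_deriveM (is_derive_id (0 : R) (1 : R)) (is_derive_cst (E k j) (0 : R) (1 : R))).
by rewrite /= scaler0 add0r [_%:A]mulr1 add0r.
Qed.

Lemma partial_is_dderive k j (f df : 'M[R]_(m, n) -> R) :
  is_dderive (delta_mx k j) f df -> partial k j f = df.
Proof.
move=> Hf; apply/funext => X; rewrite /partial derive1E.
exact: (@derive_val _ _ _ _ _ _ _ (Hf X)).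
Qed.

End MatrixDirectionalDerivative.

Section NormBounds.
Variable R : numFieldType.

Lemma ler_normM_le (x y a b : R) : `|x| <= a -> `|y| <= b -> `|x * y| <= a * b.
Proof. by move=> hx hy; rewrite normrM; apply: ler_pM. Qed.

Lemma ler_normD_le (x y a b : R) : `|x| <= a -> `|y| <= b -> `|x + y| <= a + b.
Proof. by move=> hx hy; apply: le_trans (ler_normD _ _) (lerD hx hy). Qed.

Lemma ler_pdivM (a b u v c d : R) : 0 < d -> 0 < v -> 0 <= a ->
  a <= c * u -> d * v <= b -> a / b <= c / d * (u / v).
Proof.
move=> d_gt0 v_gt0 a_ge0 a_le b_ge; have dv_gt0 : 0 < d * v by rewrite mulr_gt0.
have b_gt0 := lt_le_trans dv_gt0 b_ge.
rewrite mulrACA -invfM; apply: ler_pM => //; first by rewrite invr_ge0 ltW.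
by rewrite lef_pV2 ?posrE.
Qed.

End NormBounds.

Lemma expR1_ge1 (R : realType) : 1 <= expR (1 : R).
Proof. by rewrite -expR0 ler_expR. Qed.

Section KroneckerSums.
Variable R : pzSemiRingType.

Lemma sum_kron (I : finType) (i0 : I) (F : I -> R) :
  \sum_i (i0 == i)%:R * F i = F i0.
Proof.
rewrite (bigD1 i0) //= eqxx mul1r big1 ?addr0 // => i.
by rewrite eq_sym => /negbTE ->; rewrite mul0r.
Qed.

Lemma sum_row_kron (A B : finType) (a : A) (F : A * B -> R) :
  \sum_(i : A * B) (a == i.1)%:R * F i = \sum_b F (a, b).
Proof.
transitivity (\sum_a' \sum_b (a == a')%:R * F (a', b)).
  by rewrite pair_bigA; apply: eq_bigr => -[].
by under eq_bigr => a' _ do rewrite -mulr_sumr; rewrite sum_kron.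
Qed.

Lemma row_kron_kron (A B : finType) (i i' : A * B) :
  (i'.1 == i.1)%:R * (i' == i)%:R = (i' == i)%:R :> R.
Proof. by case: (eqVneq i' i) => [->|_]; rewrite ?eqxx ?mul1r ?mulr0. Qed.

End KroneckerSums.

Lemma sum6_pair (V : nmodType) (A B : finType) (F : A -> A -> A -> B -> B -> B -> V) :
  \sum_a1 \sum_a2 \sum_a3 \sum_b1 \sum_b2 \sum_b3 F a1 a2 a3 b1 b2 b3
  = \sum_(i3 : A * B) \sum_(i2 : A * B) \sum_(i1 : A * B)
      F i1.1 i2.1 i3.1 i1.2 i2.2 i3.2.
Proof.
under eq_bigr => a1 _ do under eq_bigr => a2 _ do rewrite exchange_big.
under eq_bigr => a1 _ do rewrite exchange_big.
under eq_bigr => a1 _ do under eq_bigr => b1 _ do under eq_bigr => a2 _ do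
  rewrite exchange_big.
rewrite pair_bigA; under eq_bigr => i1 _ do rewrite pair_bigA.
under eq_bigr => i1 _ do under eq_bigr => i2 _ do rewrite pair_bigA.
under eq_bigr => i1 _ do rewrite exchange_big.
by rewrite exchange_big; under eq_bigr => i3 _ do rewrite exchange_big.
Qed.

Section SoftminModel.
Variables (R : realType) (N p : nat) (beta : R) (mu : 'M[R]_(N, p)).
Hypotheses (beta_gt0 : 0 < beta) (N_gt0 : (0 < N)%N) (p_gt0 : (0 < p)%N).
Local Notation M := 'M[R]_(N, p).
Local Notation I := ('I_N * 'I_p)%type.

Definition entry_dir (i : I) : M := delta_mx i.1 i.2.

Definition wexp (i : I) (X : M) := expR (beta * (X i.1 i.2 + mu i.1 i.2)).
Definition rowZ (k : 'I_N) (X : M) := \sum_(j < p) wexp (k, j) X.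
Definition Zinv (X : M) := \sum_(k < N) (rowZ k X)^-1.
Definition softmax (i : I) (X : M) := wexp i X / rowZ i.1 X.
Definition rowprob (k : 'I_N) (X : M) := (rowZ k X)^-1 / Zinv X.
Definition gradG (i : I) (X : M) := rowprob i.1 X * softmax i X.
Definition Glog (X : M) := - (beta^-1 * ln (Zinv X)).

Lemma wexp_gt0 i X : 0 < wexp i X.
Proof. exact: expR_gt0. Qed.

Lemma rowZ_gt0 k X : 0 < rowZ k X.
Proof.
rewrite /rowZ (bigD1 (Ordinal p_gt0)) //=.
rewrite ltr_pwDl ?wexp_gt0 // sumr_ge0 // => j _.
exact/ltW/wexp_gt0.
Qed.

Lemma Zinv_gt0 X : 0 < Zinv X.
Proof.
rewrite /Zinv (bigD1 (Ordinal N_gt0)) //=.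
rewrite ltr_pwDl ?invr_gt0 ?rowZ_gt0 // sumr_ge0 // => k _.
by rewrite invr_ge0 ltW ?rowZ_gt0.
Qed.

Lemma softmax_ge0 i X : 0 <= softmax i X.
Proof. by rewrite divr_ge0 ?ltW ?wexp_gt0 ?rowZ_gt0. Qed.

Lemma rowprob_ge0 k X : 0 <= rowprob k X.
Proof. by rewrite divr_ge0 ?invr_ge0 ?ltW ?rowZ_gt0 ?Zinv_gt0. Qed.

Lemma gradG_ge0 i X : 0 <= gradG i X.
Proof. by rewrite mulr_ge0 ?rowprob_ge0 ?softmax_ge0. Qed.

Lemma Gbeta_Glog X : Gbeta beta mu X = Glog X.
Proof.
rewrite /Gbeta /F0 /Glog /Zinv; congr (- (_ * ln _)); apply: eq_bigr => k _.
rewrite /Fmuk mulrN mulrA mulfV ?gt_eqF // mul1r expRN lnK //.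
by rewrite posrE; exact: (rowZ_gt0 k X).
Qed.

Lemma sum_softmax k X : \sum_(j < p) softmax (k, j) X = 1.
Proof. by rewrite /softmax /= -mulr_suml mulfV // gt_eqF ?rowZ_gt0. Qed.

Lemma sum_gradG X : \sum_(i : I) gradG i X = 1.
Proof.
rewrite -(pair_bigA _ (fun k j => gradG (k, j) X)) /=.
under eq_bigr => k _ do rewrite /gradG /= -mulr_sumr sum_softmax mulr1.
by rewrite /rowprob -mulr_suml mulfV // gt_eqF ?Zinv_gt0.
Qed.

Section Derivatives.
Variable i : I.

Lemma wexp_dderive i' : is_dderive (entry_dir i) (wexp i')
  (fun X => beta * (i' == i)%:R * wexp i' X).
Proof.
apply: eq_is_dderive; last first.
  apply: (is_dderive_comp (dphi := expR)) => //.
  apply: is_dderiveM; first exact: is_dderive_cst.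
  by apply: is_dderiveD; [exact: is_dderive_entry | exact: is_dderive_cst].
by move=> X /=; case: i i' => k j [k' j']; rewrite !mxE xpair_eqE /wexp /=; ring.
Qed.

Lemma rowZ_dderive k : is_dderive (entry_dir i) (rowZ k)
  (fun X => beta * (k == i.1)%:R * wexp i X).
Proof.
apply: eq_is_dderive; last exact: is_dderive_sum (fun j => wexp_dderive (k, j)).
move=> X /=; case: i => k0 j0 /=; case: (eqVneq k k0) => [->|ne].
  rewrite (bigD1 j0) //= eqxx big1 ?addr0 // => j /negbTE nej.
  by rewrite xpair_eqE eqxx nej mulr0 mul0r.
by rewrite big1 ?mulr0 ?mul0r // => j _; rewrite xpair_eqE (negbTE ne) mulr0 mul0r.
Qed.

Lemma Zinv_dderive : is_dderive (entry_dir i) Zinv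
  (fun X => - beta * (rowZ i.1 X) ^- 2 * wexp i X).
Proof.
apply: eq_is_dderive; last first.
  apply: is_dderive_sum => k; apply: is_dderiveV; last exact: rowZ_dderive.
  by move=> X; rewrite gt_eqF ?rowZ_gt0.
move=> X /=; rewrite (bigD1 i.1) //= eqxx big1 ?addr0; first by rewrite mulr1; ring.
by move=> k /negbTE ->; rewrite mulr0 mul0r mulr0.
Qed.

Lemma Glog_dderive : is_dderive (entry_dir i) Glog (gradG i).
Proof.
apply: eq_is_dderive; last first.
  apply/is_dderiveN/is_dderiveM; first exact: is_dderive_cst.
  apply: (is_dderive_comp (dphi := GRing.inv)); last exact: Zinv_dderive.
  by move=> X; apply: is_derive1_ln; exact: Zinv_gt0.
move=> X /=; rewrite /gradG /rowprob /softmax.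
have := rowZ_gt0 i.1 X; have := Zinv_gt0 X.
by move=> Z0 S0; field; rewrite !gt_eqF.
Qed.

Lemma softmax_dderive i' : is_dderive (entry_dir i) (softmax i')
  (fun X => beta * (i'.1 == i.1)%:R * softmax i' X * ((i' == i)%:R - softmax i X)).
Proof.
apply: eq_is_dderive; last first.
  apply: is_dderiveM; first exact: wexp_dderive.
  apply: is_dderiveV; last exact: rowZ_dderive.
  by move=> X; rewrite gt_eqF ?rowZ_gt0.
move=> X /=; rewrite /softmax; have := rowZ_gt0 i.1 X => S0.
case: (eqVneq i' i) => [->|_]; first by rewrite eqxx /=; field; rewrite gt_eqF.
case: (eqVneq i'.1 i.1) => [->|_] /=; last by ring.
by field; rewrite gt_eqF.
Qed.

Lemma rowprob_dderive k : is_dderive (entry_dir i) (rowprob k)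
  (fun X => beta * rowprob k X * softmax i X * (rowprob i.1 X - (k == i.1)%:R)).
Proof.
apply: eq_is_dderive; last first.
  apply: is_dderiveM; apply: is_dderiveV;
    [| exact: rowZ_dderive | | exact: Zinv_dderive] => X;
    by rewrite gt_eqF ?rowZ_gt0 ?Zinv_gt0.
move=> X /=; rewrite /rowprob /softmax.
have := rowZ_gt0 i.1 X; have := rowZ_gt0 k X; have := Zinv_gt0 X => Z0 Sk Si.
by case: (eqVneq k i.1) => [->|_] /=; field; rewrite !gt_eqF.
Qed.

(* [dlgrad i i'] is the derivative of [ln (gradG i')] along [entry_dir i],
   divided by [beta]. *)
Definition dlgrad (i' : I) (X : M) :=
  (i' == i)%:R - 2 * (i'.1 == i.1)%:R * softmax i X + gradG i X.

Lemma gradG_dderive i' : is_dderive (entry_dir i) (gradG i')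
  (fun X => beta * gradG i' X * dlgrad i' X).
Proof.
apply: eq_is_dderive; last exact: is_dderiveM (rowprob_dderive _) (softmax_dderive _).
move=> X /=; rewrite /dlgrad /gradG -[in RHS](row_kron_kron _ i i'); ring.
Qed.

End Derivatives.

Lemma dlgrad_dderive i1 i2 i3 : is_dderive (entry_dir i1) (dlgrad i2 i3)
  (fun X => -2 * (i3.1 == i2.1)%:R * (beta * (i2.1 == i1.1)%:R * softmax i2 X
              * ((i2 == i1)%:R - softmax i1 X))
            + beta * gradG i2 X * dlgrad i1 i2 X).
Proof.
apply: eq_is_dderive; last first.
  apply: is_dderiveD; last exact: gradG_dderive.
  apply: is_dderiveD; first exact: is_dderive_cst.
  apply/is_dderiveN/is_dderiveM; first exact: is_dderive_cst.
  exact: softmax_dderive.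
by move=> X /=; ring.
Qed.

Local Notation e := (expR (1 : R)).

Definition dlgrad_maj (i i' : I) (X : M) :=
  (i' == i)%:R + 2 * (i'.1 == i.1)%:R * softmax i X + gradG i X.

Section Shift.
Variables x y : M.
Hypothesis y_small : forall k j, `|y k j| <= beta^-1.

Lemma wexp_shift i : wexp i (x + y) = wexp i x * expR (beta * y i.1 i.2).
Proof. by rewrite /wexp !mxE -expRD; congr expR; ring. Qed.

Lemma norm_beta_y_le1 i : `|beta * y i.1 i.2| <= 1.
Proof.
by rewrite normrM gtr0_norm // -(mulfV (lt0r_neq0 beta_gt0)) ler_pM2l.
Qed.

Lemma wexp_shift_le i : wexp i (x + y) <= e * wexp i x.
Proof.
rewrite wexp_shift [e * _]mulrC ler_pM2l ?wexp_gt0 // ler_expR.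
by have := norm_beta_y_le1 i; rewrite ler_norml => /andP[].
Qed.

Lemma wexp_shift_ge i : e^-1 * wexp i x <= wexp i (x + y).
Proof.
rewrite wexp_shift [e^-1 * _]mulrC ler_pM2l ?wexp_gt0 // -expRN ler_expR.
by have := norm_beta_y_le1 i; rewrite ler_norml => /andP[].
Qed.

Lemma rowZ_shift_le k : rowZ k (x + y) <= e * rowZ k x.
Proof. by rewrite /rowZ mulr_sumr; apply: ler_sum => j _; exact: wexp_shift_le. Qed.

Lemma rowZ_shift_ge k : e^-1 * rowZ k x <= rowZ k (x + y).
Proof. by rewrite /rowZ mulr_sumr; apply: ler_sum => j _; exact: wexp_shift_ge. Qed.

Lemma invr_rowZ_shift_le k : (rowZ k (x + y))^-1 <= e * (rowZ k x)^-1.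
Proof.
have e_gt0 : 0 < e by exact: expR_gt0.
rewrite -[e]invrK -invfM lef_pV2 ?posrE ?rowZ_gt0 ?rowZ_shift_ge //.
by rewrite mulr_gt0 ?invr_gt0 ?rowZ_gt0.
Qed.

Lemma Zinv_shift_ge : e^-1 * Zinv x <= Zinv (x + y).
Proof.
have e_gt0 : 0 < e by exact: expR_gt0.
rewrite /Zinv mulr_sumr; apply: ler_sum => k _.
by rewrite -invfM lef_pV2 ?posrE ?rowZ_gt0 ?rowZ_shift_le // mulr_gt0 ?rowZ_gt0.
Qed.

Lemma softmax_shift_le i : softmax i (x + y) <= e ^+ 2 * softmax i x.
Proof.
apply: le_trans (ler_pdivM _ (rowZ_gt0 i.1 x) (ltW (wexp_gt0 i _))
  (wexp_shift_le i) (rowZ_shift_ge i.1)) _; first by rewrite invr_gt0 expR_gt0.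
by rewrite invrK -expr2.
Qed.

Lemma rowprob_shift_le k : rowprob k (x + y) <= e ^+ 2 * rowprob k x.
Proof.
apply: le_trans (ler_pdivM _ (Zinv_gt0 x) _ (invr_rowZ_shift_le k) Zinv_shift_ge) _.
- by rewrite invr_gt0 expR_gt0.
- by rewrite invr_ge0 ltW ?rowZ_gt0.
by rewrite invrK -expr2.
Qed.

Lemma gradG_shift_le i : gradG i (x + y) <= e ^+ 4 * gradG i x.
Proof.
rewrite /gradG (_ : 4 = 2 + 2)%N // exprD [X in _ <= X]mulrACA.
by apply: ler_pM _ _ (rowprob_shift_le i.1) (softmax_shift_le i);
  rewrite ?rowprob_ge0 ?softmax_ge0.
Qed.

Lemma softmax_shift_le4 i : softmax i (x + y) <= e ^+ 4 * softmax i x.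
Proof.
apply: le_trans (softmax_shift_le i) (ler_wpM2r (softmax_ge0 i x) _).
exact: ler_weXn2l (@expR1_ge1 R) 2 4 isT.
Qed.

Lemma norm_dlgrad_shift_le i i' :
  `|dlgrad i i' (x + y)| <= e ^+ 4 * dlgrad_maj i i' x.
Proof.
have e4_ge1 : 1 <= e ^+ 4 by rewrite exprn_ege1 ?expR1_ge1.
have kron_le : `|(i' == i)%:R| <= e ^+ 4 * (i' == i)%:R :> R.
  by rewrite ger0_norm // ler_peMl.
have softmax_le : `|- (2 * (i'.1 == i.1)%:R * softmax i (x + y))|
    <= e ^+ 4 * (2 * (i'.1 == i.1)%:R * softmax i x).
  rewrite normrN ger0_norm; last by rewrite mulr_ge0 ?softmax_ge0.
  by rewrite [X in _ <= X]mulrCA ler_wpM2l ?softmax_shift_le4.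
have gradG_le : `|gradG i (x + y)| <= e ^+ 4 * gradG i x.
  by rewrite ger0_norm ?gradG_ge0 ?gradG_shift_le.
apply: le_trans (ler_normD_le (ler_normD_le kron_le softmax_le) gradG_le) _.
by rewrite /dlgrad_maj le_eqVlt; apply/predU1l; ring.
Qed.

Lemma norm_kron_sub_softmax_shift_le i i' :
  `|(i' == i)%:R - softmax i (x + y)| <= e ^+ 4 * ((i' == i)%:R + softmax i x).
Proof.
have e4_ge1 : 1 <= e ^+ 4 by rewrite exprn_ege1 ?expR1_ge1.
rewrite mulrDr; apply: ler_normD_le; first by rewrite ger0_norm // ler_peMl.
by rewrite normrN ger0_norm ?softmax_ge0 ?softmax_shift_le4.
Qed.

End Shift.

Lemma sum_row_kron_softmax (i' : I) X : \sum_(i : I) (i'.1 == i.1)%:R * softmax i X = 1.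
Proof. by rewrite sum_row_kron sum_softmax. Qed.

Lemma sum_row_kron_kron_softmax (i' : I) X :
  \sum_(i : I) (i'.1 == i.1)%:R * ((i' == i)%:R + softmax i X) = 2.
Proof.
under eq_bigr => i _ do rewrite mulrDr row_kron_kron.
rewrite big_split /= sum_row_kron_softmax.
by under eq_bigr => i _ do rewrite -[(i' == i)%:R]mulr1; rewrite sum_kron.
Qed.

Lemma sum_dlgrad_maj (i' : I) X : \sum_(i : I) dlgrad_maj i i' X = 4.
Proof.
under eq_bigr => i _ do rewrite /dlgrad_maj -mulrA.
rewrite !big_split /= sum_gradG -mulr_sumr sum_row_kron_softmax.
under eq_bigr => i _ do rewrite -[(i' == i)%:R]mulr1.
by rewrite sum_kron; ring.
Qed.

Section ThirdPartial.
Variable g : R -> R.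
Hypothesis g_deriv : forall n, (n < 3)%N -> forall t : R,
  is_derive t 1 (derive1n n g) (derive1n n.+1 g t).
Local Notation g1 := (derive1n 1 g).
Local Notation g2 := (derive1n 2 g).
Local Notation g3 := (derive1n 3 g).

Definition d3m (i1 i2 i3 : I) (X : M) :=
  g3 (Glog X) * gradG i1 X * gradG i2 X * gradG i3 X
  + g2 (Glog X) * beta * (gradG i2 X * gradG i3 X * (dlgrad i1 i2 X + dlgrad i1 i3 X)
                          + gradG i1 X * gradG i3 X * dlgrad i2 i3 X)
  + g1 (Glog X) * beta ^+ 2 * (gradG i3 X * dlgrad i1 i3 X * dlgrad i2 i3 X
      + gradG i3 X * (-2 * (i3.1 == i2.1)%:R * ((i2.1 == i1.1)%:R * softmax i2 X
                        * ((i2 == i1)%:R - softmax i1 X))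
                      + gradG i2 X * dlgrad i1 i2 X)).

Lemma partial3_Glog i1 i2 i3 :
  partial i1.1 i1.2 (partial i2.1 i2.2 (partial i3.1 i3.2 (fun X => g (Glog X))))
  = d3m i1 i2 i3.
Proof.
have Dg n i : (n < 3)%N -> is_dderive (entry_dir i) (fun X => derive1n n g (Glog X))
    (fun X => derive1n n.+1 g (Glog X) * gradG i X).
  by move=> n_lt3; apply: is_dderive_comp (Glog_dderive i) => X; exact: g_deriv.
have D1 : is_dderive (entry_dir i3) (fun X => g (Glog X))
    (fun X => g1 (Glog X) * gradG i3 X) := Dg 0%N i3 isT.
have D2 : is_dderive (entry_dir i2) (fun X => g1 (Glog X) * gradG i3 X)
    (fun X => g2 (Glog X) * gradG i2 X * gradG i3 X
              + g1 (Glog X) * (beta * gradG i3 X * dlgrad i2 i3 X)).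
  apply: eq_is_dderive (is_dderiveM (Dg 1%N i2 isT) (gradG_dderive i2 i3)).
  by move=> X /=; ring.
have D3 : is_dderive (entry_dir i1) (fun X => g2 (Glog X) * gradG i2 X * gradG i3 X
              + g1 (Glog X) * (beta * gradG i3 X * dlgrad i2 i3 X)) (d3m i1 i2 i3).
  apply: eq_is_dderive; last first.
    apply: is_dderiveD.
      apply: is_dderiveM (gradG_dderive i1 i3).
      exact: is_dderiveM (Dg 2%N i1 isT) (gradG_dderive i1 i2).
    apply: is_dderiveM (Dg 1%N i1 isT) _.
    apply: is_dderiveM (dlgrad_dderive i1 i2 i3).
    exact: is_dderiveM (is_dderive_cst _ _) (gradG_dderive i1 i3).
  by move=> X; cbv beta; rewrite /d3m; ring.
by rewrite (partial_is_dderive D1) (partial_is_dderive D2) (partial_is_dderive D3).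
Qed.

Variables s1 s2 s3 : R.
Hypotheses (g1_le : forall t, `|g1 t| <= s1) (g2_le : forall t, `|g2 t| <= s2)
  (g3_le : forall t, `|g3 t| <= s3).

(* [d3m] with g^(r) replaced by its bound s_r, [dlgrad] by [dlgrad_maj], and
   every minus sign by a plus sign. *)
Definition d3m_maj (i1 i2 i3 : I) (X : M) :=
  s3 * (gradG i1 X * gradG i2 X * gradG i3 X)
  + s2 * beta * (gradG i2 X * gradG i3 X * (dlgrad_maj i1 i2 X + dlgrad_maj i1 i3 X)
                 + gradG i1 X * gradG i3 X * dlgrad_maj i2 i3 X)
  + s1 * beta ^+ 2 * (gradG i3 X * dlgrad_maj i1 i3 X * dlgrad_maj i2 i3 X
      + gradG i3 X * (2 * (i3.1 == i2.1)%:R * ((i2.1 == i1.1)%:R * softmax i2 X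
                        * ((i2 == i1)%:R + softmax i1 X))
                      + gradG i2 X * dlgrad_maj i1 i2 X)).

Lemma norm_d3m_shift_le (x y : M) : (forall k j, `|y k j| <= beta^-1) ->
  forall i1 i2 i3, `|d3m i1 i2 i3 (x + y)| <= (e ^+ 4) ^+ 3 * d3m_maj i1 i2 i3 x.
Proof.
move=> y_small i1 i2 i3.
have q_le i : `|gradG i (x + y)| <= e ^+ 4 * gradG i x.
  by rewrite ger0_norm ?gradG_ge0 ?gradG_shift_le.
have w_le i : `|softmax i (x + y)| <= e ^+ 4 * softmax i x.
  by rewrite ger0_norm ?softmax_ge0 ?softmax_shift_le4.
have c_le i i' : `|dlgrad i i' (x + y)| <= e ^+ 4 * dlgrad_maj i i' x.
  exact: norm_dlgrad_shift_le.
have dw_le i i' :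
    `|(i' == i)%:R - softmax i (x + y)| <= e ^+ 4 * ((i' == i)%:R + softmax i x).
  exact: norm_kron_sub_softmax_shift_le.
have beta_le : `|beta| <= beta by rewrite gtr0_norm.
have beta2_le : `|beta ^+ 2| <= beta ^+ 2 by rewrite ger0_norm // exprn_ge0 // ltW.
have kron_le (b : bool) : `|b%:R| <= b%:R :> R by rewrite ger0_norm.
have m2kron_le (b : bool) : `|-2 * b%:R| <= 2 * b%:R :> R.
  by rewrite normrM normrN !ger0_norm.
rewrite /d3m; apply: le_trans.
  apply: ler_normD_le; first apply: ler_normD_le.
  - apply: ler_normM_le (q_le _); apply: ler_normM_le (q_le _).
    exact: ler_normM_le (g3_le _) (q_le _).
  - apply: ler_normM_le (ler_normM_le (g2_le _) beta_le) _; apply: ler_normD_le.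
      exact: ler_normM_le (ler_normM_le (q_le _) (q_le _)) (ler_normD_le (c_le _ _) (c_le _ _)).
    exact: ler_normM_le (ler_normM_le (q_le _) (q_le _)) (c_le _ _).
  - apply: ler_normM_le (ler_normM_le (g1_le _) beta2_le) _; apply: ler_normD_le.
      exact: ler_normM_le (ler_normM_le (q_le _) (c_le _ _)) (c_le _ _).
    apply: ler_normM_le (q_le _) (ler_normD_le _ (ler_normM_le (q_le _) (c_le _ _))).
    apply: ler_normM_le (m2kron_le _) _.
    exact: ler_normM_le (ler_normM_le (kron_le _) (w_le _)) (dw_le _ _).
by rewrite /d3m_maj le_eqVlt; apply/predU1l; ring.
Qed.

Lemma sum_d3m_maj X :
  \sum_(i3 : I) \sum_(i2 : I) \sum_(i1 : I) d3m_maj i1 i2 i3 X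
  = s3 + 12 * beta * s2 + 24 * beta ^+ 2 * s1.
Proof.
have sum1 i2 i3 : \sum_(i1 : I) d3m_maj i1 i2 i3 X
    = gradG i2 X * (gradG i3 X * (s3 + 8 * s2 * beta + 4 * s1 * beta ^+ 2))
      + dlgrad_maj i2 i3 X * (gradG i3 X * (s2 * beta + 4 * s1 * beta ^+ 2))
      + (i3.1 == i2.1)%:R * softmax i2 X * (gradG i3 X * (4 * s1 * beta ^+ 2)).
  transitivity (\sum_(i1 : I)
      (gradG i1 X * (s3 * gradG i2 X * gradG i3 X + s2 * beta * gradG i3 X * dlgrad_maj i2 i3 X)
     + dlgrad_maj i1 i2 X * (s2 * beta * gradG i2 X * gradG i3 X
                             + s1 * beta ^+ 2 * gradG i3 X * gradG i2 X)
     + dlgrad_maj i1 i3 X * (s2 * beta * gradG i2 X * gradG i3 X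
                             + s1 * beta ^+ 2 * gradG i3 X * dlgrad_maj i2 i3 X)
     + (i2.1 == i1.1)%:R * ((i2 == i1)%:R + softmax i1 X)
         * (2 * s1 * beta ^+ 2 * gradG i3 X * (i3.1 == i2.1)%:R * softmax i2 X))).
    by apply: eq_bigr => i1 _; rewrite /d3m_maj; ring.
  rewrite !big_split -!mulr_suml /= sum_gradG !sum_dlgrad_maj.
  by rewrite sum_row_kron_kron_softmax; ring.
have sum2 i3 : \sum_(i2 : I) \sum_(i1 : I) d3m_maj i1 i2 i3 X
    = gradG i3 X * (s3 + 12 * beta * s2 + 24 * beta ^+ 2 * s1).
  under eq_bigr => i2 _ do rewrite sum1.
  rewrite !big_split -!mulr_suml /= sum_gradG sum_dlgrad_maj.
  by rewrite sum_row_kron_softmax; ring.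
under eq_bigr => i3 _ do rewrite sum2.
by rewrite -mulr_suml sum_gradG mul1r.
Qed.

Lemma sum_Ukj_le x :
  (\sum_(k1 < N) \sum_(k2 < N) \sum_(k3 < N) \sum_(j1 < p) \sum_(j2 < p) \sum_(j3 < p)
     Ukj beta (fun X => g (Gbeta beta mu X)) k1 k2 k3 j1 j2 j3 x
   <= ((e ^+ 4) ^+ 3 * (s3 + 12 * beta * s2 + 24 * beta ^+ 2 * s1))%:E)%E.
Proof.
have -> : (fun X => g (Gbeta beta mu X)) = (fun X => g (Glog X)).
  by apply/funext => X; rewrite Gbeta_Glog.
rewrite sum6_pair -(sum_d3m_maj x) mulr_sumr -sumEFin; apply: lee_sum => i3 _.
rewrite mulr_sumr -sumEFin; apply: lee_sum => i2 _.
rewrite mulr_sumr -sumEFin; apply: lee_sum => i1 _.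
apply: ge_ereal_sup => _ [y y_small <-].
by rewrite lee_fin partial3_Glog; exact: norm_d3m_shift_le.
Qed.

End ThirdPartial.
End SoftminModel.

Lemma C3_is_derive (R : realType) (g : R -> R) : C3 g ->
  forall n, (n < 3)%N -> forall t : R, is_derive t 1 (derive1n n g) (derive1n n.+1 g t).
Proof.
move=> [g_der _] n n_lt3 t; rewrite derive1nS derive1E.
exact: derivableP (g_der n n_lt3 t).
Qed.

Lemma le_supnorm_der (R : realType) r (g : R -> R) t :
  ((`|derive1n r g t|)%:E <= supnorm_der r g)%E.
Proof. by apply: ereal_sup_ubound; exists t. Qed.

Lemma supnorm_der_ge0 (R : realType) r (g : R -> R) : (0 <= supnorm_der r g)%E.
Proof. exact: le_trans (le_supnorm_der r g 0). Qed.

Lemma supnorm_derP (R : realType) r (g : R -> R) :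
  supnorm_der r g = +oo%E \/
  exists2 s : R, supnorm_der r g = s%:E & forall t, `|derive1n r g t| <= s.
Proof.
have := supnorm_der_ge0 r g.
case E: (supnorm_der r g) => [s| |] // _; [right | by left].
by exists s => // t; rewrite -lee_fin -E le_supnorm_der.
Qed.

Lemma mule_sum3_pinfty (R : realType) (u v w : R) (a b c : \bar R) :
  0 < u -> 0 < v -> 0 < w -> (0 <= a)%E -> (0 <= b)%E -> (0 <= c)%E ->
  (a = +oo \/ b = +oo \/ c = +oo)%E -> (u%:E * (a + v%:E * b + w%:E * c) = +oo)%E.
Proof.
move=> u_gt0 v_gt0 w_gt0 a_ge0 b_ge0 c_ge0 abc_oo.
have vb_ge0 : (0 <= v%:E * b)%E by rewrite mule_ge0 // lee_fin ltW.
have wc_ge0 : (0 <= w%:E * c)%E by rewrite mule_ge0 // lee_fin ltW.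
suff -> : (a + v%:E * b + w%:E * c = +oo)%E by rewrite muleC gt0_mulye ?lte_fin.
apply/eqP; rewrite eq_le leey /=.
case: abc_oo => [->|[->|->]].
- by rewrite addeC (addeC _ (v%:E * b)%E); apply: lee_paddl => //; apply: lee_paddl.
- rewrite addeC; apply: lee_paddl => //; apply: lee_paddl => //.
  by rewrite muleC gt0_mulye ?lte_fin.
- by apply: lee_paddl => //; [rewrite adde_ge0 | rewrite muleC gt0_mulye ?lte_fin].
Qed.

Lemma sum_Ukj_le_expR12 (R : realType) (N p : nat) (beta : R) (mu : 'M[R]_(N, p))
  (g : R -> R) (s1 s2 s3 : R) :
  0 < beta ->
  (forall n, (n < 3)%N -> forall t : R, is_derive t 1 (derive1n n g) (derive1n n.+1 g t)) ->
  (forall t, `|derive1n 1 g t| <= s1) -> (forall t, `|derive1n 2 g t| <= s2) ->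
  (forall t, `|derive1n 3 g t| <= s3) ->
  forall x : 'M[R]_(N, p),
  (\sum_(k1 < N) \sum_(k2 < N) \sum_(k3 < N)
     \sum_(j1 < p) \sum_(j2 < p) \sum_(j3 < p)
       Ukj beta (fun X => g (Gbeta beta mu X)) k1 k2 k3 j1 j2 j3 x
   <= (expR 12 * (s3 + 16 * beta * s2 + 24 * beta ^+ 2 * s1))%:E)%E.
Proof.
move=> beta_gt0 g_deriv g1_le g2_le g3_le x; have beta_ge0 := ltW beta_gt0.
have s1_ge0 : 0 <= s1 by exact: le_trans (g1_le 0).
have s2_ge0 : 0 <= s2 by exact: le_trans (g2_le 0).
have s3_ge0 : 0 <= s3 by exact: le_trans (g3_le 0).
set bound := s3 + 12 * beta * s2 + 24 * beta ^+ 2 * s1.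
have bound_ge0 : 0 <= (expR 1 ^+ 4) ^+ 3 * bound.
  by rewrite mulr_ge0 ?exprn_ge0 ?expR_ge0 // !addr_ge0 // !mulr_ge0 ?exprn_ge0.
apply: (@le_trans _ _ ((expR 1 ^+ 4) ^+ 3 * bound)%:E).
  case: (posnP N) => [N0|N_gt0]; first by subst N; rewrite big_ord0.
  case: (posnP p) => [p0|p_gt0]; last by apply: sum_Ukj_le.
  subst p; rewrite big1 // => k1 _; rewrite big1 // => k2 _; rewrite big1 // => k3 _.
  exact: big_ord0.
(* The computation gives the constant 12 where the statement has 16. *)
rewrite lee_fin -exprM -expRM_natl mulr1 ler_wpM2l ?expR_ge0 // /bound.
have : 0 <= beta * s2 by rewrite mulr_ge0.
lra.
Qed.

Theorem lemmaF4 (R : realType) (N p : nat) (beta : R) (mu : 'M[R]_(N, p))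
  (g : R -> R) :
  0 < beta -> C3 g ->
  forall x : 'M[R]_(N, p),
  (\sum_(k1 < N) \sum_(k2 < N) \sum_(k3 < N)
     \sum_(j1 < p) \sum_(j2 < p) \sum_(j3 < p)
       Ukj beta (fun X => g (Gbeta beta mu X)) k1 k2 k3 j1 j2 j3 x
   <= (expR 12)%:E * (supnorm_der 3 g + (16 * beta)%:E * supnorm_der 2 g
                       + (24 * beta ^+ 2)%:E * supnorm_der 1 g))%E.
Proof.
move=> beta_gt0 /C3_is_derive g_deriv x.
set rhs := (X in (_ <= X)%E).
have rhs_pinfty : (supnorm_der 3 g = +oo \/ supnorm_der 2 g = +oo
                   \/ supnorm_der 1 g = +oo)%E -> rhs = +oo%E.
  by apply: mule_sum3_pinfty; rewrite ?expR_gt0 ?mulr_gt0 ?exprn_gt0 ?supnorm_der_ge0.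
have [n3|[s3 n3 g3_le]] := supnorm_derP 3 g; first by rewrite rhs_pinfty ?leey //; left.
have [n2|[s2 n2 g2_le]] := supnorm_derP 2 g; first by rewrite rhs_pinfty ?leey //; right; left.
have [n1|[s1 n1 g1_le]] := supnorm_derP 1 g; first by rewrite rhs_pinfty ?leey //; right; right.
rewrite /rhs n1 n2 n3 -!EFinM.
exact: sum_Ukj_le_expR12.
Qed.
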